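(* Let $\mathcal K$ and $\mathcal K_\sigma$ be weighted simplicial complexes on a finite vertex set such that $\mathcal K_\sigma=\mathcal K\cup\{\sigma\}$, where $\sigma\notin\mathcal K$ is a $k$-simplex, the weight function $w$ of $\mathcal K_\sigma$ restricts to that of $\mathcal K$, and $w$ is injective on $k$-faces. Denote labels in $\mathcal K$ by $\ell$ and in $\mathcal K_\sigma$ by $\ell_\sigma$, and let $\mathrm{MSA}(\cdot)$ denote the (unique) minimal $k$-spanning acycle. Then: (i) $|\mathrm{MSA}(\mathcal K_\sigma)\setminus\mathrm{MSA}(\mathcal K)|\le 1$ and $|\mathrm{MSA}(\mathcal K)\setminus\mathrm{MSA}(\mathcal K_\sigma)|\le 1$; equivalently $\sum_{\tau\in\mathcal K}\mathbf 1(\ell(\tau)\ne\ell_\sigma(\tau))\le 1$. (ii) If $\ell_\sigma(\sigma)=1$, then $\mathrm{MSA}(\mathcal K)=\mathrm{MSA}(\mathcal K_\sigma)$, and hence $\mathbf M^\phi(\mathcal K)=\mathbf M^\phi(\mathcal K_\sigma)$ for every strictly increasing $\phi:\mathbb{R}_+\to\mathbb{R}_+$.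
   Context: A weighted complex is a simplicial complex $\mathcal K$ with a monotone weight $w:\mathcal K\to\mathbb{R}$ (every sublevel set $\{\tau:w(\tau)\le t\}$ is a subcomplex). For a simplex $\tau$, $\mathcal K(\tau^-)=\{\rho\in\mathcal K:w(\rho)<w(\tau)\}$. Homology is over a field. A $j$-simplex $\tau$ has label $\ell(\tau)=1$ (positive) if $\partial\tau\in\partial C_j(\mathcal K(\tau^-))$ (adding $\tau$ to $\mathcal K(\tau^-)$ creates a new $j$-cycle) and $\ell(\tau)=-1$ (negative) otherwise. A set $S$ of $k$-faces is a $k$-spanning acycle if $\beta_{k-1}(\mathcal K_{k-1}\cup S)=\beta_{k-1}(\mathcal K)$ and $\beta_k(\mathcal K_{k-1}\cup S)=0$ (reduced Betti numbers, $\mathcal K_{k-1}$ the $(k-1)$-skeleton); the minimal $k$-spanning acycle $\mathrm{MSA}(\mathcal K)$ minimizes $\sum_{\tau\in S}w(\tau)$. $\mathbf M^\phi(\mathcal K)=\sum_{\tau\in\mathrm{MSA}(\mathcal K)}\phi(w(\tau))$. *)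

From HB Require Import structures.
From mathcomp Require Import all_boot all_order all_algebra.
From mathcomp Require Import reals.
Set Implicit Arguments. Unset Strict Implicit. Unset Printing Implicit Defensive.
Import Order.TTheory GRing.Theory Num.Theory.
Local Open Scope ring_scope.

(* Simplices on a finite vertex type V are finite sets of vertices;
   a j-simplex has cardinality j+1.  The empty set plays the role of the
   unique (-1)-simplex of the augmented chain complex (reduced homology). *)

Section Chains.
Variables (F : fieldType) (V : finType).

Definition is_complex (K : {set {set V}}) : Prop :=
  set0 \notin K /\
  forall s t : {set V}, s \in K -> t \subset s -> t != set0 -> t \in K.

Definition chain := {ffun {set V} -> F^o}.

Definition chi (s : {set V}) : chain := [ffun t => if t == s then 1 else 0].

(* incidence number [s : t] w.r.t. the vertex order given by enum_rank:
   (-1)^i if t is s with its i-th vertex removed, 0 otherwise *)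
Definition incid (s t : {set V}) : F :=
  if (t \subset s) && (#|s| == #|t|.+1)%N then
    \sum_(v in s :\: t)
       (-1) ^+ #|[set u in s | (enum_rank u < enum_rank v)%N]|
  else 0.

Definition bd (c : chain) : chain := [ffun t => \sum_(s : {set V}) c s * incid s t].

Lemma bd_linear : linear bd.
Proof.
move=> a x y; apply/ffunP=> t; rewrite !ffunE.
rewrite scaler_sumr -big_split; apply: eq_bigr => s _.
by rewrite !ffunE mulrDl scalerAl.
Qed.

HB.instance Definition _ := GRing.isLinear.Build F chain chain _ bd bd_linear.

Definition bdL : 'End(chain) := linfun bd.

(* simplices of cardinality p (i.e. of dimension p-1) of the complex S,
   augmented with the empty simplex in cardinality 0 *)
Definition simplices (S : {set {set V}}) (p : nat) : {set {set V}} :=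
  [set s | ((s \in S) || (s == set0)) && (#|s| == p)].

Definition Cspace (S : {set {set V}}) (p : nat) : {vspace chain} :=
  (<< [seq chi s | s <- enum (simplices S p)] >>)%VS.

(* reduced Betti number of S in dimension p-1 (indexed by cardinality p) *)
Definition rbetti (S : {set {set V}}) (p : nat) : nat :=
  (\dim (lker bdL :&: Cspace S p) - \dim (bdL @: Cspace S p.+1))%N.

End Chains.

Section Weighted.
Variables (F : fieldType) (V : finType) (R : realType).

(* monotone weight on K: sublevel sets are subcomplexes *)
Definition monotone_weight (K : {set {set V}}) (w : {set V} -> R) : Prop :=
  forall s t, s \in K -> t \in K -> t \subset s -> w t <= w s.

Definition Kminus (K : {set {set V}}) (w : {set V} -> R) (tau : {set V}) :=
  [set rho in K | w rho < w tau].

Definition positive (K : {set {set V}}) (w : {set V} -> R) (tau : {set V}) : bool :=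
  (bdL F V (chi F tau) \in (bdL F V @: Cspace F (Kminus K w tau) #|tau|))%VS.

Definition label (K : {set {set V}}) (w : {set V} -> R) (tau : {set V}) : int :=
  if positive K w tau then 1 else -1.

Definition kfaces (K : {set {set V}}) (k : nat) := [set s in K | #|s| == k.+1].
Definition skeleton_below (K : {set {set V}}) (k : nat) := [set s in K | (#|s| <= k)%N].

Definition spanning_acycle (K : {set {set V}}) (k : nat) (S : {set {set V}}) : bool :=
  [&& S \subset kfaces K k,
      rbetti F (skeleton_below K k :|: S) k == rbetti F K k &
      rbetti F (skeleton_below K k :|: S) k.+1 == 0%N].

Definition weight_sum (w : {set V} -> R) (S : {set {set V}}) : R := \sum_(t in S) w t.

Definition is_MSA (K : {set {set V}}) (w : {set V} -> R) (k : nat) (S : {set {set V}}) : Prop :=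
  spanning_acycle K k S /\
  forall S', spanning_acycle K k S' -> weight_sum w S <= weight_sum w S'.

Definition Mphi (phi : R -> R) (w : {set V} -> R) (S : {set {set V}}) : R :=
  \sum_(t in S) phi (w t).

End Weighted.

From HB Require Import structures.
From mathcomp Require Import all_boot all_order all_algebra.
From mathcomp Require Import reals.
From mathcomp Require Import ring zify.
Import Order.TTheory GRing.Theory Num.Theory.
Local Open Scope ring_scope.
Set Implicit Arguments. Unset Strict Implicit. Unset Printing Implicit Defensive.

(* Identify a k-face [tau] with the (k-1)-cycle [bd tau]. By rank-nullity, a
   k-spanning acycle is exactly a basis of the span of these boundary vectors,
   so with injective weights the minimal one is unique and is the greedy basis:
   the faces whose boundary is not spanned by the boundaries of lighter faces,
   i.e. the negative faces. Adding [sigma] can only add [sigma] itself to the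
   greedy basis, and it can turn at most one face [a] from negative to
   positive: if [bd a] becomes spanned once [bd sigma] is available, the
   exchange lemma puts [bd sigma] in the span of [a] and the faces lighter
   than [a], so no heavier face can change. *)

Section Lines.
Variables (F : fieldType) (vT : vectType F).
Implicit Types (u v : vT) (U : {vspace vT}).

Lemma dim_add_line v U : \dim (<[v]> + U) = ((v \notin U) + \dim U)%N.
Proof.
have [vU|vU] /= := boolP (v \in U); first by rewrite (addv_idPr _) // -memvE.
have nz_v : v != 0 by apply: contraNneq vU => ->; rewrite mem0v.
rewrite dimv_disjoint_sum ?dim_vline ?nz_v //.
apply/eqP; rewrite -subv0; apply/subvP => _ /memv_capP[/vlineP[c ->] cvU].
rewrite memv0 scaler_eq0; apply: contraNT vU => /norP[nz_c _].
by rewrite -[v](scalerK nz_c) memvZ.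
Qed.

Lemma line_exchange u v U :
  v \in (<[u]> + U)%VS -> v \notin U -> u \in (<[v]> + U)%VS.
Proof.
move=> /memv_addP[_ /vlineP[c ->] [x xU ->]] vU.
have nz_c : c != 0 by apply: contraNneq vU => ->; rewrite scale0r add0r.
apply/memv_addP; exists (c^-1 *: (c *: u + x)); first exact: memvZ (memv_line _).
exists (- (c^-1 *: x)); first by rewrite memvN memvZ.
by rewrite scalerDr scalerA mulVf // scale1r addrK.
Qed.

End Lines.

Section VectorFamily.
Variables (F : fieldType) (vT : vectType F) (T : finType) (e : T -> vT).
Implicit Types (A S X : {set T}) (U : {vspace vT}).

Definition fspan S : {vspace vT} := (\sum_(x in S) <[e x]>)%VS.

Lemma memv_fspan S x : x \in S -> e x \in fspan S.
Proof. by move=> xS; apply/subvP: (memv_line (e x)); apply: (sumv_sup x). Qed.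

Lemma fspan_subv S U : (forall x, x \in S -> e x \in U) -> (fspan S <= U)%VS.
Proof. by move=> SU; apply/subv_sumP => x /SU; rewrite memvE. Qed.

Lemma fspanS S S' : S \subset S' -> (fspan S <= fspan S')%VS.
Proof. by move=> /subsetP sSS'; apply: fspan_subv => x /sSS' /memv_fspan. Qed.

Lemma fspanU1 x S : fspan (x |: S) = (<[e x]> + fspan S)%VS.
Proof.
apply/subv_anti/andP; split.
  apply: fspan_subv => y /setU1P[->|/memv_fspan yS].
    exact: subvP (addvSl _ _) _ (memv_line _).
  exact: subvP (addvSr _ _) _ yS.
by rewrite subv_add -memvE memv_fspan ?setU11 ?fspanS ?subsetUr.
Qed.

Lemma dim_fspanU1 x S : \dim (fspan (x |: S)) = ((e x \notin fspan S) + \dim (fspan S))%N.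
Proof. by rewrite fspanU1 dim_add_line. Qed.

Lemma fspanE S : fspan S = <<[seq e x | x <- enum S]>>%VS.
Proof. by rewrite span_def big_map big_enum. Qed.

Lemma dim_fspan S : (\dim (fspan S) <= #|S|)%N.
Proof. by rewrite fspanE (leq_trans (dim_span _)) // size_map cardE. Qed.

Definition findep S := \dim (fspan S) == #|S|.

Lemma findep0 : findep set0.
Proof. by rewrite /findep cards0 -leqn0 (leq_trans (dim_fspan _)) ?cards0. Qed.

Lemma findepU1 x S :
  x \notin S -> e x \notin fspan S -> findep S -> findep (x |: S).
Proof. by move=> xS exS /eqP iS; rewrite /findep dim_fspanU1 exS iS cardsU1 xS. Qed.

Lemma findepD1 S x :
  findep S -> x \in S -> e x \notin fspan (S :\ x) /\ findep (S :\ x).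
Proof.
move=> /eqP + xS; rewrite -{1}(setD1K xS) dim_fspanU1 (cardsD1 x S) xS.
have := dim_fspan (S :\ x).
by case: (e x \notin _) => /= le_dim; [move=> /eqP; rewrite eqn_add2l | lia].
Qed.

Lemma findep_peel S :
  (forall X, X \subset S -> X != set0 -> exists2 x, x \in X & e x \notin fspan (X :\ x)) ->
  findep S.
Proof.
move=> peel; suff IH n X : (#|X| <= n)%N -> X \subset S -> findep X.
  exact: IH (leqnn _) (subxx _).
elim: n X => [|n IHn] X.
  by rewrite leqn0 cards_eq0 => /eqP-> _; apply: findep0.
move=> leXn sXS; have [->|nzX] := eqVneq X set0; first exact: findep0.
have [x xX exX] := peel X sXS nzX.
rewrite -(setD1K xX) findepU1 ?setD11 // IHn //; last exact: subset_trans (subD1set _ _) sXS.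
by move: leXn; rewrite (cardsD1 x) xX.
Qed.

Variables (R : realDomainType) (w : T -> R).

Definition lighter A a := [set b in A | w b < w a].
Definition greedy A := [set a in A | e a \notin fspan (lighter A a)].
Definition fbasis A S := [&& S \subset A, findep S & fspan S == fspan A].
Definition fweight S := \sum_(x in S) w x.

Lemma greedy_sub A : greedy A \subset A.
Proof. by apply/subsetP => a; rewrite inE => /andP[]. Qed.

Lemma greedy_findep A : {in A &, injective w} -> findep (greedy A).
Proof.
move=> w_inj; apply: findep_peel => X sXG /set0Pn[x0 x0X].
have sXA := subset_trans sXG (greedy_sub A).
have [x xX xmax] := arg_maxP w x0X.
exists x => //; have := subsetP sXG x xX; rewrite inE => /andP[_].
apply: contra; apply/subvP/fspanS/subsetP => y /setD1P[yx yX].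
have /= le_yx := xmax y yX.
rewrite inE (subsetP sXA) //= lt_neqAle le_yx andbT.
by apply: contraNneq yx => /w_inj -> //; apply: (subsetP sXA).
Qed.

Lemma fbasis_exchange A S m b : fbasis A S -> m \in S -> b \in A ->
  e b \notin fspan (S :\ m) -> fbasis A (b |: (S :\ m)).
Proof.
move=> /and3P[sSA iS /eqP spSA] mS bA ebS.
have [_ iSm] := findepD1 iS mS.
have bSm : b \notin S :\ m by apply: contra ebS; apply: memv_fspan.
have iS' := findepU1 bSm ebS iSm.
rewrite /fbasis iS' subUset sub1set bA (subset_trans (subD1set _ _)) //= -spSA.
rewrite eqEdim (eqP iS) (eqP iS') cardsU1 bSm (cardsD1 m S) mS leqnn andbT.
by rewrite fspanU1 subv_add -memvE spSA memv_fspan //= -spSA fspanS ?subD1set.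
Qed.

Lemma min_fbasis_greedy A S : {in A &, injective w} -> fbasis A S ->
  (forall S', fbasis A S' -> fweight S <= fweight S') -> S = greedy A.
Proof.
move=> w_inj bS Smin; case/and3P: (bS) => sSA iS /eqP spSA.
have sSG : S \subset greedy A.
  apply/subsetP => m mS; rewrite inE (subsetP sSA) //=; apply/negP => emL.
  have [emS _] := findepD1 iS mS.
  have [b bL ebS] : exists2 b, b \in lighter A m & e b \notin fspan (S :\ m).
    apply/exists_inP; apply: contraNT emS => /exists_inPn ebS.
    by apply: subvP emL; apply: fspan_subv => b /ebS; rewrite negbK.
  have [bA lt_bm] : b \in A /\ w b < w m by move: bL; rewrite inE => /andP[].
  have bSm : b \notin S :\ m by apply: contra ebS; apply: memv_fspan.
  have := Smin _ (fbasis_exchange bS mS bA ebS).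
  by rewrite /fweight big_setU1 //= (big_setD1 m mS) /= lerD2r leNgt lt_bm.
apply/eqP; rewrite eqEcard sSG /= -(eqP iS) spSA -(eqP (greedy_findep w_inj)).
exact/dimvS/fspanS/greedy_sub.
Qed.

Lemma lighter_subU1 A s a : lighter A a \subset lighter (s |: A) a.
Proof. by apply/subsetP => b; rewrite !inE => /andP[-> ->]; rewrite orbT. Qed.

Lemma lighterU1_sub A s a : lighter (s |: A) a \subset s |: lighter A a.
Proof. by apply/subsetP => b; rewrite !inE => /andP[/orP[]-> ->]; rewrite ?orbT. Qed.

Lemma fspan_lighterU1 A s a :
  (fspan (lighter (s |: A) a) <= <[e s]> + fspan (lighter A a))%VS.
Proof. by rewrite -fspanU1 fspanS ?lighterU1_sub. Qed.

Definition flipped A s :=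
  [set a in A | (e a \in fspan (lighter A a)) != (e a \in fspan (lighter (s |: A) a))].

Lemma in_flipped A s a : (a \in flipped A s) =
  [&& a \in A, e a \notin fspan (lighter A a) & e a \in fspan (lighter (s |: A) a)].
Proof.
rewrite inE; case: (a \in A) => //=.
have [ea_in|_] /= := boolP (e a \in fspan (lighter A a)); last by case: (_ \in _).
by rewrite (subvP (fspanS (lighter_subU1 A s a)) _ ea_in).
Qed.

Lemma flipped_heavier A s a b :
  a \in flipped A s -> w a < w b -> b \notin flipped A s.
Proof.
rewrite !in_flipped => /and3P[aA ea_out ea_in] lt_ab.
(* By exchange, [e s] lies in the span of [a] and the elements lighter than [a]. *)
have es_b : e s \in fspan (lighter A b).
  have := line_exchange (subvP (fspan_lighterU1 A s a) _ ea_in) ea_out.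
  rewrite -fspanU1; apply/subvP/fspanS/subsetP => c /setU1P[->|].
    by rewrite inE aA.
  by rewrite !inE => /andP[-> /lt_trans->].
apply/and3P => -[_ /negP eb_out /(subvP (fspan_lighterU1 A s b)) eb_in]; apply: eb_out.
by apply: subvP eb_in; rewrite subv_add -memvE es_b subvv.
Qed.

Lemma card_flipped A s : {in A &, injective w} -> (#|flipped A s| <= 1)%N.
Proof.
move=> w_inj; apply/card_le1_eqP => a b af bf.
have [aA bA] : a \in A /\ b \in A by rewrite !in_flipped in af bf; case/andP: af; case/andP: bf.
case: (ltgtP (w a) (w b)) => [lt_ab|lt_ba|/(w_inj _ _ aA bA)//].
  by move/negP: (flipped_heavier af lt_ab).
by move/negP: (flipped_heavier bf lt_ba).
Qed.

Lemma greedyU1_diff A s : greedy (s |: A) :\: greedy A \subset [set s].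
Proof.
apply/subsetP => a; rewrite !inE => /andP[+ /andP[/predU1P[->//|aA] ea_out]].
rewrite aA /= negbK => /(subvP (fspanS (lighter_subU1 A s a))).
by rewrite (negbTE ea_out).
Qed.

Lemma greedy_diffU1 A s : greedy A :\: greedy (s |: A) \subset flipped A s.
Proof.
apply/subsetP => a; rewrite in_flipped !inE => /andP[+ /andP[aA ea_out]].
by rewrite aA orbT ea_out negbK.
Qed.

Lemma greedyU1_id A s :
  e s \in fspan (lighter (s |: A) s) -> greedy (s |: A) = greedy A.
Proof.
move=> es_in.
have fspan_eq a : fspan (lighter (s |: A) a) = fspan (lighter A a).
  apply/subv_anti; rewrite (fspanS (lighter_subU1 _ _ _)) andbT.
  apply: fspan_subv => b; rewrite inE => /andP[/setU1P[-> lt_sa|bA lt_ba]].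
    apply: subvP es_in; apply/fspanS/subsetP => c; rewrite !inE.
    case/andP=> /predU1P[->|cA lt_cs]; first by rewrite ltxx.
    by rewrite cA (lt_trans lt_cs lt_sa).
  by apply: memv_fspan; rewrite inE bA.
apply/setP => a; rewrite !inE fspan_eq.
have [->|//] := eqVneq a s.
by rewrite -fspan_eq es_in !andbF.
Qed.

End VectorFamily.

Section Boundary.
Variables (F : fieldType) (V : finType).
Implicit Types (s t u : {set V}) (v : V).

Definition vsign s v : F :=
  (-1) ^+ #|[set u in s | (enum_rank u < enum_rank v)%N]|.

Lemma incidE s t : incid F s t =
  if (t \subset s) && (#|s| == #|t|.+1) then \sum_(v in s :\: t) vsign s v else 0.
Proof. by []. Qed.

Lemma sum_incid_faces s (X : {set V} -> F) :
  \sum_u incid F s u * X u = \sum_(v in s) vsign s v * X (s :\ v).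
Proof.
transitivity (\sum_(v in s) \sum_u (if u == s :\ v then vsign s v * X u else 0)).
  rewrite exchange_big; apply: eq_bigr => u _.
  rewrite incidE; case: ifP => [/andP[us /eqP cs]|nc].
    have [v0 def] : exists v0, s :\: u = [set v0].
      by apply/cards1P; rewrite cardsD (setIidPr us) cs subSn // subnn.
    have v0s : v0 \in s by have := set11 v0; rewrite -def => /setDP[].
    have ue : u = s :\ v0 by rewrite -def setDDr setDv set0U (setIidPr us).
    rewrite def big_set1 (bigD1 v0) //= -ue eqxx big1 ?addr0 // => v /andP[vs vn].
    by rewrite ue; case: eqP => // /setP /(_ v0); rewrite !inE eqxx v0s eq_sym (negbTE vn).
  rewrite mul0r big1 // => v vs; case: eqP => // ue; move: nc.
  by rewrite ue subD1set (cardsD1 v s) vs eqxx.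
apply: eq_bigr => v _; rewrite (bigD1 (s :\ v)) //= eqxx big1 ?addr0 //.
by move=> u /negbTE ->.
Qed.

Lemma incid_faces s t : incid F s t = \sum_(v in s) vsign s v * (s :\ v == t)%:R.
Proof.
rewrite -(sum_incid_faces s (fun u => (u == t)%:R)) (bigD1 t) //= eqxx mulr1.
by rewrite big1 ?addr0 // => u /negbTE; rewrite eq_sym => ->; rewrite mulr0.
Qed.

Lemma vsignD1 s v v' : v \in s ->
  vsign (s :\ v) v' = (if (enum_rank v < enum_rank v')%N then -1 else 1) * vsign s v'.
Proof.
move=> vs; rewrite /vsign.
have -> : [set u in s :\ v | (enum_rank u < enum_rank v')%N] =
          [set u in s | (enum_rank u < enum_rank v')%N] :\ v.
  by apply/setP => u; rewrite !inE andbA.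
rewrite [in RHS](cardsD1 v) exprD !inE vs /=.
by case: ifP; rewrite ?expr1 ?expr0 ?mul1r // mulrA mulrNN !mul1r.
Qed.

Lemma sum_incid_incid s t : \sum_u incid F s u * incid F u t = 0.
Proof.
rewrite sum_incid_faces.
pose f v v' := vsign s v * vsign s v' * (s :\ v :\ v' == t)%:R.
have f_sym v v' : f v v' = f v' v.
  by rewrite /f [vsign s v * _]mulrC !setDDl setUC.
pose lt_rk v v' := (enum_rank v < enum_rank v')%N.
(* Removing [v] then [v'], or [v'] then [v], gives the same face with opposite signs. *)
have split_v v : v \in s -> vsign s v * incid F (s :\ v) t =
    \sum_(v' in s | lt_rk v' v) f v v' - \sum_(v' in s | lt_rk v v') f v v'.
  move=> vs; rewrite incid_faces mulr_sumr (bigID (lt_rk v)) /= addrC.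
  congr (_ + _); last rewrite -sumrN.
  - apply: eq_big => [v'|v' /andP[_ /negbTE lt_vv']].
      rewrite !inE -andbA andbCA; case: (v' \in s) => //=.
      rewrite /lt_rk -leqNgt ltn_neqAle; congr (_ && _).
      by rewrite (inj_eq (inj_comp val_inj (@enum_rank_inj _))).
    by rewrite vsignD1 // -/(lt_rk v v') lt_vv' /f; ring.
  - apply: eq_big => [v'|v' /andP[_ lt_vv']].
      by rewrite !inE; have [->|] //= := eqVneq v' v; rewrite /lt_rk ltnn andbF.
    by rewrite vsignD1 // -/(lt_rk v v') lt_vv' /f; ring.
rewrite (eq_bigr _ split_v) sumrB; apply/eqP; rewrite subr_eq0; apply/eqP.
rewrite (exchange_big_dep (mem s)) /=; last by move=> v v' _ /andP[].
by apply: eq_bigr => v vs; apply: eq_big => [v'|v' _]; [rewrite vs | apply: f_sym].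
Qed.

End Boundary.

Section BoundaryVectors.
Variables (F : fieldType) (V : finType).
Implicit Types (s t : {set V}) (S K : {set {set V}}).

Definition bdchi s : chain F V := bdL F V (chi F s).

Lemma bd_chi s t : bd (chi F s) t = incid F s t.
Proof.
rewrite ffunE (bigD1 s) //= ffunE eqxx mul1r big1 ?addr0 // => s' ne_s's.
by rewrite ffunE (negbTE ne_s's) mul0r.
Qed.

Lemma bdchi_cycle s : bdchi s \in lker (bdL F V).
Proof.
rewrite memv_ker /bdchi !lfunE /=; apply/eqP/ffunP => t; rewrite !ffunE.
by rewrite -[RHS](sum_incid_incid F s t); apply: eq_bigr => u _; rewrite bd_chi.
Qed.

Definition chain_at s (c : chain F V) : F^o := c s.

Lemma chain_at_linear s : linear (chain_at s).
Proof. by move=> a c c'; rewrite /chain_at !ffunE. Qed.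

HB.instance Definition _ s :=
  GRing.isLinear.Build F (chain F V) F^o _ (chain_at s) (chain_at_linear s).

Lemma chi_notin_fspan s S : s \notin S -> chi F s \notin fspan (@chi F V) S.
Proof.
move=> sS; have : (fspan (@chi F V) S <= lker (linfun (chain_at s)))%VS.
  apply: fspan_subv => t tS; rewrite memv_ker lfunE /= /chain_at ffunE.
  by rewrite [s == t]eq_sym (negbTE (memPn sS t tS)).
move/subvP/(_ (chi F s))/contra; apply.
by rewrite memv_ker lfunE /= /chain_at ffunE eqxx oner_eq0.
Qed.

Lemma chi_findep S : findep (@chi F V) S.
Proof.
apply: findep_peel => X _ /set0Pn[s sX]; exists s => //.
by rewrite chi_notin_fspan ?setD11.
Qed.

Lemma span_chi_supp (c : chain F V) S : (forall t, c t != 0 -> t \in S) ->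
  c \in <<map (@chi F V) (enum S)>>%VS.
Proof.
move=> suppS.
have -> : c = \sum_(t in S) c t *: chi F t.
  apply/ffunP => t; rewrite sum_ffunE; have [tS|tS] := boolP (t \in S).
    rewrite (bigD1 t) //= big1 => [|t' /andP[_ ne_t't]].
      by rewrite !ffunE eqxx addr0 -[RHS]/(c t * 1) mulr1.
    by rewrite !ffunE eq_sym (negbTE ne_t't) scaler0.
  rewrite big1; first by apply/eqP; apply: contraNT tS => /suppS.
  by move=> t' t'S; rewrite !ffunE; case: eqP t'S => [<-|_]; rewrite ?(negbTE tS) ?scaler0.
apply: memv_suml => t tS; apply/memvZ/memv_span.
by rewrite map_f ?mem_enum.
Qed.

Lemma bdchi_Cspace K k s : is_complex K -> s \in kfaces K k -> bdchi s \in Cspace F K k.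
Proof.
move=> [_ K_closed]; rewrite inE => /andP[sK /eqP card_s].
apply: span_chi_supp => t; rewrite /bdchi lfunE /= bd_chi incidE.
case: ifP => [/andP[ts] | _]; last by rewrite eqxx.
rewrite card_s eqSS => /eqP card_t _; rewrite inE card_t eqxx andbT.
by have [->|nz_t] := eqVneq t set0; rewrite ?orbT // (K_closed s t).
Qed.

End BoundaryVectors.

Section Complexes.
Variables (F : fieldType) (V : finType).
Implicit Types (s sigma tau : {set V}) (S K : {set {set V}}).
Local Notation bdchi := (@bdchi F V).

Lemma limg_Cspace S p : (bdL F V @: Cspace F S p)%VS = fspan bdchi (simplices S p).
Proof. by rewrite limg_span -map_comp /fspan span_def big_map big_enum. Qed.

Lemma dim_Cspace S p : \dim (Cspace F S p) = #|simplices S p|.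
Proof. by rewrite /Cspace -fspanE (eqP (chi_findep _ _)). Qed.

Lemma dim_cycles_Cspace S p : \dim (lker (bdL F V) :&: Cspace F S p) =
  (#|simplices S p| - \dim (fspan bdchi (simplices S p)))%N.
Proof. by rewrite -dim_Cspace -(limg_ker_dim (bdL F V) (Cspace F S p)) capvC limg_Cspace addnK. Qed.

Lemma simplices_succ K k : simplices K k.+1 = kfaces K k.
Proof. by apply/setP => s; rewrite !inE; case: eqP => [->|]; rewrite ?cards0 ?andbF ?orbF. Qed.

Section Skeleton.
Variables (K S : {set {set V}}) (k : nat).
Hypothesis sSK : S \subset kfaces K k.
Let Kc := skeleton_below K k :|: S.

Let card_S s : s \in S -> #|s| = k.+1.
Proof. by move/(subsetP sSK); rewrite inE => /andP[_ /eqP]. Qed.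

Lemma simplices_skeletonU : simplices Kc k = simplices K k.
Proof.
apply/setP => s; rewrite !inE; have [card_s|] := eqVneq #|s| k; rewrite ?andbF //.
rewrite card_s leqnn !andbT; have [/card_S|_] := boolP (s \in S); last by rewrite orbF.
by rewrite card_s; lia.
Qed.

Lemma simplices_skeletonU_succ : simplices Kc k.+1 = S.
Proof.
apply/setP => s; rewrite !inE; have [sS|_] := boolP (s \in S).
  by rewrite orbT /= (card_S sS) eqxx.
rewrite orbF; have [card_s|] := eqVneq #|s| k.+1; rewrite ?andbF // card_s ltnn andbF andbT.
by apply/eqP => s0; rewrite s0 cards0 in card_s.
Qed.

Lemma simplices_skeletonU_succ2 : simplices Kc k.+2 = set0.
Proof.
apply/setP => s; rewrite !inE; have [/card_S->|_] := boolP (s \in S).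
  by rewrite eqSS (ltn_eqF (ltnSn k)) andbF.
rewrite orbF; have [card_s|] := eqVneq #|s| k.+2; rewrite ?andbF // card_s andbT.
by apply/norP; split; [rewrite ltnNge leqW ?andbF | apply/eqP => s0; rewrite s0 cards0 in card_s].
Qed.

Lemma rbetti_skeletonU :
  rbetti F Kc k = (\dim (lker (bdL F V) :&: Cspace F K k) - \dim (fspan bdchi S))%N.
Proof. by rewrite /rbetti limg_Cspace simplices_skeletonU_succ /Cspace simplices_skeletonU. Qed.

Lemma rbetti_skeletonU_succ : rbetti F Kc k.+1 = (#|S| - \dim (fspan bdchi S))%N.
Proof.
rewrite /rbetti limg_Cspace simplices_skeletonU_succ2 /fspan big_set0 dimv0 subn0.
by rewrite dim_cycles_Cspace simplices_skeletonU_succ.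
Qed.

End Skeleton.

Lemma rbetti_kfaces K k : rbetti F K k =
  (\dim (lker (bdL F V) :&: Cspace F K k) - \dim (fspan bdchi (kfaces K k)))%N.
Proof. by rewrite /rbetti limg_Cspace simplices_succ. Qed.

Lemma spanning_acycleE K k S :
  is_complex K -> spanning_acycle F K k S = fbasis bdchi (kfaces K k) S.
Proof.
move=> cK; rewrite /spanning_acycle /fbasis; case sSA: (S \subset kfaces K k) => //=.
rewrite rbetti_skeletonU_succ // rbetti_skeletonU // rbetti_kfaces subn_eq0 andbC.
have sSA_span := fspanS bdchi sSA.
have sAZ : (fspan bdchi (kfaces K k) <= lker (bdL F V) :&: Cspace F K k)%VS.
  by apply: fspan_subv => s sA; rewrite memv_cap bdchi_cycle bdchi_Cspace.
have le_SA := dimvS sSA_span; have le_AZ := dimvS sAZ.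
congr (_ && _); first by rewrite /findep eqn_leq dim_fspan.
by rewrite eqEdim sSA_span /=; apply/idP/idP => [/eqP|]; lia.
Qed.

Lemma kfacesU1 K sigma k :
  #|sigma| = k.+1 -> kfaces (sigma |: K) k = sigma |: kfaces K k.
Proof.
move=> card_sigma; apply/setP => s; rewrite !inE.
by have [->|_] := eqVneq s sigma; rewrite /= ?card_sigma ?eqxx.
Qed.

Lemma is_MSA_greedy (R : realType) K k (w : {set V} -> R) M :
  is_complex K -> {in kfaces K k &, injective w} ->
  is_MSA F K w k M -> M = greedy bdchi w (kfaces K k).
Proof.
move=> cK w_inj [acM minM]; apply: min_fbasis_greedy => //.
  by rewrite -spanning_acycleE.
by move=> S'; rewrite -spanning_acycleE //; apply: minM.
Qed.

Variables (R : realType) (w : {set V} -> R).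

Lemma positiveE K k tau : #|tau| = k.+1 ->
  positive F K w tau = (bdchi tau \in fspan bdchi (lighter w (kfaces K k) tau)).
Proof.
move=> card_tau; rewrite /positive limg_Cspace card_tau; congr (_ \in fspan _ _).
apply/setP => s; rewrite !inE.
by case: eqP => [->|]; rewrite ?cards0 ?andbF ?orbF // andbAC.
Qed.

Lemma positiveU1 K sigma tau : #|tau| != #|sigma| ->
  positive F (sigma |: K) w tau = positive F K w tau.
Proof.
move=> card_tau; rewrite /positive /Cspace.
suff -> : simplices (Kminus (sigma |: K) w tau) #|tau| = simplices (Kminus K w tau) #|tau|.
  by [].
apply/setP => s; rewrite !inE; have [->|_] //= := eqVneq s sigma.
by rewrite [#|sigma| == _]eq_sym (negbTE card_tau) !andbF.
Qed.

Lemma eq_label K K' tau :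
  (label F K w tau == label F K' w tau) = (positive F K w tau == positive F K' w tau).
Proof. by rewrite /label; do 2!case: (positive _ _ _ _). Qed.

Lemma label_eq1 K tau : (label F K w tau == 1) = positive F K w tau.
Proof. by rewrite /label; case: (positive _ _ _ _). Qed.

Lemma label_changes_flipped K sigma k : #|sigma| = k.+1 ->
  [set tau in K | label F K w tau != label F (sigma |: K) w tau]
    \subset flipped bdchi w (kfaces K k) sigma.
Proof.
move=> card_sigma; apply/subsetP => tau; rewrite inE eq_label => /andP[tK pos_ne].
have card_tau : #|tau| = k.+1.
  apply/eqP; rewrite -card_sigma; apply: contraNT pos_ne => /positiveU1->.
  by rewrite eqxx.
move: pos_ne; rewrite !(positiveE _ card_tau) kfacesU1 // => pos_ne.
by rewrite inE pos_ne inE tK card_tau eqxx.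
Qed.

End Complexes.

Theorem lemma3p2 (F : fieldType) (V : finType) (R : realType)
    (K : {set {set V}}) (sigma : {set V}) (k : nat) (w : {set V} -> R)
    (HK : is_complex K) (HKs : is_complex (sigma |: K))
    (Hsig : sigma \notin K) (Hdim : #|sigma| = k.+1)
    (Hmono : monotone_weight (sigma |: K) w)
    (Hinj : {in kfaces (sigma |: K) k &, injective w})
    (M Ms : {set {set V}})
    (HM : is_MSA F K w k M) (HMs : is_MSA F (sigma |: K) w k Ms) :
  [/\ (#|Ms :\: M| <= 1)%N, (#|M :\: Ms| <= 1)%N,
      (#|[set tau in K | label F K w tau != label F (sigma |: K) w tau]| <= 1)%N &
      (label F (sigma |: K) w sigma = 1 ->
         M = Ms /\
         forall phi : R -> R,
           {in [pred x | 0 <= x] &, {mono phi : x y / x < y}} ->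
           {in [pred x | 0 <= x], forall x, 0 <= phi x} ->
           Mphi phi w M = Mphi phi w Ms)].
Proof.
set A := kfaces K k.
have AU1 : kfaces (sigma |: K) k = sigma |: A := kfacesU1 K Hdim.
have w_inj : {in A &, injective w}.
  by move=> x y xA yA; apply: Hinj; rewrite AU1; apply: setU1r.
have -> : M = greedy (@bdchi F V) w A := is_MSA_greedy HK w_inj HM.
have -> : Ms = greedy (@bdchi F V) w (sigma |: A).
  by rewrite -AU1; apply: is_MSA_greedy HKs Hinj HMs.
have card_flip := card_flipped (@bdchi F V) sigma w_inj.
split.
- by rewrite (leq_trans (subset_leq_card (greedyU1_diff _ _ _ _))) ?cards1.
- exact: leq_trans (subset_leq_card (greedy_diffU1 _ _ _ _)) card_flip.
- exact: leq_trans (subset_leq_card (label_changes_flipped F w K Hdim)) card_flip.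
- move=> /eqP; rewrite label_eq1 (positiveE F w _ Hdim) AU1 => /greedyU1_id ->.
  by split.
Qed.
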